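(* Let $\tilde A\in\mathbb{R}^{m\times s}$ have full column rank, $W=\tilde A^\top\tilde A$, $\tilde\lambda>0$, and $r\in\mathbb{R}^s$. Let $u^*=W^{-1}r$, $v^*=(W+\tilde\lambda I)^{-1}r$ and $z^*=\frac1{\tilde\lambda}(u^*-v^* )$ (so that $z^*=(W^2+\tilde\lambda W)^{-1}r$). Suppose $\hat u,\hat v\in\mathbb{R}^s$ satisfy $\|\hat u-u^*\|_W\le\epsilon_{2,1}\|u^*\|_W$ and $\|\hat v-v^*\|_{W+\tilde\lambda I}\le\epsilon_{2,2}\|v^*\|_{W+\tilde\lambda I}$, and let $\hat z=\frac1{\tilde\lambda}(\hat u-\hat v)$. Then $$\|\hat z-z^*\|_{W^2+\tilde\lambda W}\le\frac{1}{\tilde\lambda}\Big(\epsilon_{2,1}\|\tilde A\tilde A^\top+\tilde\lambda I\|+\epsilon_{2,2}\|\tilde A\tilde A^\top\|\Big)\|z^*\|_{W^2+\tilde\lambda W}.$$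
   Context: For positive (semi)definite $B$, $\|x\|_B=\sqrt{x^\top Bx}$; $\|\cdot\|$ on matrices is the spectral norm. *)

From HB Require Import structures.
From mathcomp Require Import all_boot all_order all_algebra.
From mathcomp Require Import boolp classical_sets reals.
Set Implicit Arguments. Unset Strict Implicit. Unset Printing Implicit Defensive.
Import Order.TTheory GRing.Theory Num.Theory.
Local Open Scope ring_scope.
Local Open Scope classical_set_scope.

Definition vnorm (R : realType) (n : nat) (x : 'cV[R]_n) : R :=
  Num.sqrt (\sum_i (x i 0) ^+ 2).

Definition bnorm (R : realType) (n : nat) (B : 'M[R]_n) (x : 'cV[R]_n) : R :=
  Num.sqrt ((x^T *m B *m x) 0 0).

Definition specnorm (R : realType) (m n : nat) (A : 'M[R]_(m, n)) : R :=
  sup [set vnorm (A *m x) | x in [set x : 'cV[R]_n | vnorm x = 1]].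

From HB Require Import structures.
From mathcomp Require Import all_boot all_order all_algebra.
From mathcomp Require Import boolp classical_sets reals.
From mathcomp Require Import ring lra.
Import Order.TTheory GRing.Theory Num.Theory.
Local Open Scope ring_scope.

(* With [W = A^T A] the exact solutions satisfy [u* = (W + lam) z*] and [v* = W z*], and
   [zh - z* = lam^-1 ((uh - u* ) - (vh - v* ))].  Since [W^2 + lam W = A^T (A A^T + lam) A],
   the quadratic form of [W^2 + lam W] is at most [|A A^T + lam|] times that of [W], and
   [|u*|_W^2 = |(A A^T + lam) A z*|^2 <= |A A^T + lam| |z*|_(W^2 + lam W)^2]; likewise with
   [|A A^T|] for the pair [W + lam], [v*].  Each relative error thus passes to the
   [(W^2 + lam W)]-norm at the price of one spectral norm, and the triangle inequality
   adds the two contributions. *)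

Section QuadraticForms.
Set Implicit Arguments. Unset Strict Implicit. Unset Printing Implicit Defensive.
Variable R : realType.

Definition dot n (x y : 'cV[R]_n) : R := (x^T *m y) 0 0.
Definition qform n (B : 'M[R]_n) (x : 'cV[R]_n) : R := dot x (B *m x).
Definition psd n (B : 'M[R]_n) := forall x, 0 <= qform B x.
Definition posdef n (B : 'M[R]_n) := forall x, x != 0 -> 0 < qform B x.

Lemma dotE n (x y : 'cV[R]_n) : dot x y = \sum_i x i 0 * y i 0.
Proof. by rewrite /dot mxE; apply: eq_bigr => i _; rewrite mxE. Qed.

Lemma dotC n (x y : 'cV[R]_n) : dot x y = dot y x.
Proof. by rewrite !dotE; apply: eq_bigr => i _; rewrite mulrC. Qed.

Lemma dotDr n (x y z : 'cV[R]_n) : dot x (y + z) = dot x y + dot x z.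
Proof. by rewrite /dot mulmxDr mxE. Qed.

Lemma dotZr n k (x y : 'cV[R]_n) : dot x (k *: y) = k * dot x y.
Proof. by rewrite /dot -scalemxAr !mxE. Qed.

Lemma dotDl n (x y z : 'cV[R]_n) : dot (x + y) z = dot x z + dot y z.
Proof. by rewrite ![dot _ z]dotC dotDr. Qed.

Lemma dotZl n k (x y : 'cV[R]_n) : dot (k *: x) y = k * dot x y.
Proof. by rewrite ![dot _ y]dotC dotZr. Qed.

Lemma dot_mulmx m n (x : 'cV[R]_m) (B : 'M[R]_(m, n)) (y : 'cV[R]_n) :
  dot x (B *m y) = dot (B^T *m x) y.
Proof. by rewrite /dot trmx_mul trmxK mulmxA. Qed.

Lemma dotxx_ge0 n (x : 'cV[R]_n) : 0 <= dot x x.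
Proof. by rewrite dotE; apply: sumr_ge0 => i _; rewrite -expr2 sqr_ge0. Qed.

Lemma dotxx_eq0 n (x : 'cV[R]_n) : (dot x x == 0) = (x == 0).
Proof.
apply/eqP/eqP => [|->]; last by rewrite /dot mulmx0 mxE.
rewrite dotE => /psumr_eq0P x2_eq0; apply/matrixP => i j; rewrite (ord1 j) mxE.
have /eqP := x2_eq0 (fun k _ => sqr_ge0 (x k 0)) i isT.
by rewrite mulf_eq0 orbb => /eqP.
Qed.

Lemma vnormE n (x : 'cV[R]_n) : vnorm x = Num.sqrt (dot x x).
Proof. by rewrite /vnorm dotE; congr Num.sqrt; apply: eq_bigr => i _; rewrite expr2. Qed.

Lemma vnorm0 n : vnorm (0 : 'cV[R]_n) = 0.
Proof. by apply/eqP; rewrite vnormE sqrtr_eq0 le_eqVlt dotxx_eq0 eqxx. Qed.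

Lemma vnorm_ge0 n (x : 'cV[R]_n) : 0 <= vnorm x.
Proof. by rewrite sqrtr_ge0. Qed.

Lemma sqr_vnorm n (x : 'cV[R]_n) : vnorm x ^+ 2 = dot x x.
Proof. by rewrite vnormE sqr_sqrtr ?dotxx_ge0. Qed.

Lemma vnormZ n k (x : 'cV[R]_n) : vnorm (k *: x) = `|k| * vnorm x.
Proof. by rewrite !vnormE dotZl dotZr mulrA -expr2 sqrtrM ?sqr_ge0 // sqrtr_sqr. Qed.

Lemma vnorm_gt0 n (x : 'cV[R]_n) : (0 < vnorm x) = (x != 0).
Proof. by rewrite vnormE sqrtr_gt0 lt_def dotxx_ge0 dotxx_eq0 andbT. Qed.

Lemma bnormE n (B : 'M[R]_n) (x : 'cV[R]_n) : bnorm B x = Num.sqrt (qform B x).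
Proof. by rewrite /bnorm /qform /dot mulmxA. Qed.

Lemma bnorm_ge0 n (B : 'M[R]_n) (x : 'cV[R]_n) : 0 <= bnorm B x.
Proof. exact: sqrtr_ge0. Qed.

Lemma qformZ n (B : 'M[R]_n) k (x : 'cV[R]_n) : qform B (k *: x) = k ^+ 2 * qform B x.
Proof. by rewrite /qform -scalemxAr dotZl dotZr mulrA expr2. Qed.

Lemma qformD n (B : 'M[R]_n) (x y : 'cV[R]_n) : B^T = B ->
  qform B (x + y) = qform B x + 2 * dot x (B *m y) + qform B y.
Proof.
move=> symB; rewrite /qform mulmxDr !dotDl !dotDr [dot y (B *m x)]dot_mulmx symB.
by rewrite [dot (B *m y) x]dotC; ring.
Qed.

Lemma bnormZ n (B : 'M[R]_n) k (x : 'cV[R]_n) : bnorm B (k *: x) = `|k| * bnorm B x.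
Proof. by rewrite !bnormE qformZ sqrtrM ?sqr_ge0 // sqrtr_sqr. Qed.

(* [t |-> qform B (x + t y)] is a nonnegative quadratic, so its discriminant is
   nonpositive. *)
Lemma dot_mulmx_sqr_le n (B : 'M[R]_n) (x y : 'cV[R]_n) : B^T = B -> psd B ->
  dot x (B *m y) ^+ 2 <= qform B x * qform B y.
Proof.
move=> symB psdB; set a := qform B x; set b := dot x (B *m y); set c := qform B y.
have quad_ge0 t : 0 <= a + 2 * t * b + t ^+ 2 * c.
  by have := psdB (x + t *: y); rewrite qformD // qformZ -scalemxAr dotZr mulrA.
have [c0|c_neq0] := eqVneq c 0.
  have [b0|b_neq0] := eqVneq b 0; first by rewrite b0 c0 expr0n mulr0.
  have := quad_ge0 (- (a + 1) / (2 * b)).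
  have -> : 2 * (- (a + 1) / (2 * b)) * b = - (a + 1) by field.
  rewrite c0 mulr0 addr0; lra.
have := quad_ge0 (- b / c).
have -> : a + 2 * (- b / c) * b + (- b / c) ^+ 2 * c = (a * c - b ^+ 2) / c by field.
have c_gt0 : 0 < c by rewrite lt_def c_neq0 psdB.
by rewrite pmulr_lge0 ?invr_gt0 // subr_ge0.
Qed.

Lemma normr_dot_le n (B : 'M[R]_n) (x y : 'cV[R]_n) : B^T = B -> psd B ->
  `|dot x (B *m y)| <= bnorm B x * bnorm B y.
Proof.
move=> symB psdB; rewrite !bnormE -sqrtrM // -sqrtr_sqr ler_sqrt ?mulr_ge0 //.
exact: dot_mulmx_sqr_le.
Qed.

Lemma sqr_bnorm n (B : 'M[R]_n) (x : 'cV[R]_n) : psd B -> bnorm B x ^+ 2 = qform B x.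
Proof. by move=> psdB; rewrite bnormE sqr_sqrtr. Qed.

Lemma bnormD_le n (B : 'M[R]_n) (x y : 'cV[R]_n) : B^T = B -> psd B ->
  bnorm B (x + y) <= bnorm B x + bnorm B y.
Proof.
move=> symB psdB; rewrite -(ger0_norm (addr_ge0 (bnorm_ge0 B x) (bnorm_ge0 B y))).
rewrite -sqrtr_sqr bnormE ler_sqrt ?sqr_ge0 // qformD // sqrrD !sqr_bnorm //.
have := ler_norm (dot x (B *m y)); have := normr_dot_le x y symB psdB; lra.
Qed.

Lemma bnormB_le n (B : 'M[R]_n) (x y : 'cV[R]_n) : B^T = B -> psd B ->
  bnorm B (x - y) <= bnorm B x + bnorm B y.
Proof.
move=> symB psdB; apply: le_trans (bnormD_le x (- y) symB psdB) _.
by rewrite -scaleN1r bnormZ normrN1 mul1r.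
Qed.

Lemma qform1 n (x : 'cV[R]_n) : qform 1%:M x = dot x x.
Proof. by rewrite /qform mul1mx. Qed.

Lemma dot_sqr_le n (x y : 'cV[R]_n) : dot x y ^+ 2 <= dot x x * dot y y.
Proof.
rewrite -!qform1 -[y in dot x y]mul1mx.
by apply: dot_mulmx_sqr_le => [|z]; rewrite ?trmx1 // qform1 dotxx_ge0.
Qed.

Lemma normr_dot_le_vnorm n (x y : 'cV[R]_n) : `|dot x y| <= vnorm x * vnorm y.
Proof.
rewrite !vnormE -sqrtrM ?dotxx_ge0 // -sqrtr_sqr ler_sqrt ?mulr_ge0 ?dotxx_ge0 //.
exact: dot_sqr_le.
Qed.

Lemma specnorm_ub m n (B : 'M[R]_(m, n)) (x : 'cV[R]_n) :
  vnorm x = 1 -> vnorm (B *m x) <= specnorm B.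
Proof.
move=> x1; apply: ub_le_sup; last by exists x.
exists (Num.sqrt (\sum_i dot (row i B)^T (row i B)^T)) => _ [y /= y1 <-].
rewrite vnormE ler_sqrt; last by apply: sumr_ge0 => i _; apply: dotxx_ge0.
rewrite dotE; apply: ler_sum => i _.
have := dot_sqr_le (row i B)^T y; rewrite -(sqr_vnorm y) y1 expr1n mulr1 -expr2.
by rewrite {1}/dot trmxK -row_mul mxE.
Qed.

Lemma specnorm_ge0 m n (B : 'M[R]_(m, n)) : 0 <= specnorm B.
Proof.
rewrite /specnorm; set S := (X in sup X).
have [S0|/set0P[_ [x x1 _]]] := eqVneq S set0; first by rewrite S0 sup0.
exact: le_trans (vnorm_ge0 _) (specnorm_ub B x1).
Qed.

Lemma specnorm_le m n (B : 'M[R]_(m, n)) (x : 'cV[R]_n) :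
  vnorm (B *m x) <= specnorm B * vnorm x.
Proof.
have [->|x_neq0] := eqVneq x 0.
  by rewrite mulmx0 !vnorm0 mulr0.
have x_gt0 : 0 < vnorm x by rewrite vnorm_gt0.
rewrite -ler_pdivrMr // mulrC.
have := specnorm_ub B (_ : vnorm ((vnorm x)^-1 *: x) = 1).
rewrite -scalemxAr !vnormZ gtr0_norm ?invr_gt0 // mulVf ?gt_eqF //.
by apply.
Qed.

Lemma qform_le_specnorm n (B : 'M[R]_n) (x : 'cV[R]_n) :
  qform B x <= specnorm B * dot x x.
Proof.
apply: le_trans (ler_norm _) _; apply: le_trans (normr_dot_le_vnorm _ _) _.
rewrite -sqr_vnorm expr2 mulrA [specnorm B * _]mulrC -mulrA.
by rewrite ler_wpM2l ?vnorm_ge0 ?specnorm_le.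
Qed.

Lemma le_mul_of_sqr_le (p q c : R) : 0 <= p -> 0 <= q -> 0 <= c ->
  p ^+ 2 <= q * (c * p) -> p <= c * q.
Proof.
move=> p_ge0 q_ge0 c_ge0 le_p2; have [->|p_neq0] := eqVneq p 0; first exact: mulr_ge0.
have p_gt0 : 0 < p by rewrite lt_def p_neq0.
by rewrite -(ler_pM2r p_gt0) -expr2 mulrAC mulrC.
Qed.

(* [|B x|^2 = x . B (B x)], then Cauchy-Schwarz for the form of [B]. *)
Lemma sqr_mulmx_le_specnorm n (B : 'M[R]_n) (x : 'cV[R]_n) : B^T = B -> psd B ->
  dot (B *m x) (B *m x) <= specnorm B * qform B x.
Proof.
move=> symB psdB; apply: le_mul_of_sqr_le; rewrite ?dotxx_ge0 ?specnorm_ge0 //.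
have := dot_mulmx_sqr_le x (B *m x) symB psdB.
rewrite [dot x _]dot_mulmx symB => /le_trans; apply.
by rewrite ler_wpM2l // qform_le_specnorm.
Qed.

(* [|A x|^4 = (x . A^T (A x))^2 <= |x|^2 |A^T (A x)|^2]: this brings in [A A^T]. *)
Lemma sqr_mulmx_le_specnorm_tr m n (A : 'M[R]_(m, n)) (x : 'cV[R]_n) :
  dot (A *m x) (A *m x) <= specnorm (A *m A^T) * dot x x.
Proof.
apply: le_mul_of_sqr_le; rewrite ?dotxx_ge0 ?specnorm_ge0 //.
have := dot_sqr_le x (A^T *m (A *m x)).
rewrite {1}dot_mulmx trmxK => /le_trans; apply.
rewrite ler_wpM2l ?dotxx_ge0 // -dot_mulmx mulmxA.
exact: qform_le_specnorm.
Qed.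

Lemma qform_gram m n (A : 'M[R]_(m, n)) (x : 'cV[R]_n) :
  qform (A^T *m A) x = dot (A *m x) (A *m x).
Proof. by rewrite /qform -mulmxA dot_mulmx trmxK. Qed.

Lemma qform_gram_tr m n (A : 'M[R]_(m, n)) (y : 'cV[R]_m) :
  qform (A *m A^T) y = dot (A^T *m y) (A^T *m y).
Proof. by rewrite /qform -mulmxA dot_mulmx. Qed.

Lemma qform_conj m n (A : 'M[R]_(m, n)) (B : 'M[R]_m) (x : 'cV[R]_n) :
  qform (A^T *m B *m A) x = qform B (A *m x).
Proof. by rewrite /qform -!mulmxA dot_mulmx trmxK. Qed.

Lemma qform_add_scalar n (B : 'M[R]_n) lam (x : 'cV[R]_n) :
  qform (B + lam%:M) x = qform B x + lam * dot x x.
Proof. by rewrite /qform mulmxDl mul_scalar_mx dotDr dotZr. Qed.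

Lemma psd_gram m n (A : 'M[R]_(m, n)) : psd (A^T *m A).
Proof. by move=> x; rewrite qform_gram dotxx_ge0. Qed.

Lemma psd_add_scalar n (B : 'M[R]_n) lam : psd B -> 0 <= lam -> psd (B + lam%:M).
Proof. by move=> psdB lam_ge0 x; rewrite qform_add_scalar addr_ge0 ?mulr_ge0 ?dotxx_ge0. Qed.

Lemma posdef_add_scalar n (B : 'M[R]_n) lam : psd B -> 0 < lam -> posdef (B + lam%:M).
Proof.
move=> psdB lam_gt0 x x_neq0; rewrite qform_add_scalar ltr_wpDl // mulr_gt0 //.
by rewrite lt_def dotxx_eq0 x_neq0 dotxx_ge0.
Qed.

Lemma posdef_gram m n (A : 'M[R]_(m, n)) : \rank A = n -> posdef (A^T *m A).
Proof.
move=> rankA x x_neq0; rewrite qform_gram lt_def dotxx_eq0 dotxx_ge0 andbT.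
have freeAT : row_free A^T by rewrite /row_free mxrank_tr rankA.
by rewrite -trmx_eq0 trmx_mul mulmx_free_eq0 // trmx_eq0.
Qed.

Lemma posdef_psd n (B : 'M[R]_n) : posdef B -> psd B.
Proof.
move=> pdB x; have [->|/pdB/ltW //] := eqVneq x 0.
by rewrite /qform mulmx0 /dot mulmx0 mxE.
Qed.

Lemma posdef_mulmx_eq0 n (B : 'M[R]_n) (x : 'cV[R]_n) : posdef B -> B *m x = 0 -> x = 0.
Proof.
move=> pdB Bx0; apply/eqP/negPn/negP => /pdB.
by rewrite /qform Bx0 /dot mulmx0 mxE ltxx.
Qed.

Lemma posdef_unitmx n (B : 'M[R]_n) : posdef B -> B \in unitmx.
Proof.
move=> pdB; rewrite -unitmx_tr -row_free_unit -kermx_eq0.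
apply/eqP/row_matrixP => i; rewrite row0; apply: trmx_inj; rewrite trmx0.
apply: (posdef_mulmx_eq0 pdB).
by rewrite -[B in B *m _]trmxK -trmx_mul -row_mul mulmx_ker row0 trmx0.
Qed.

Lemma bnorm0 n (B : 'M[R]_n) : bnorm B 0 = 0.
Proof. by rewrite bnormE /qform mulmx0 /dot mulmx0 mxE sqrtr0. Qed.

Lemma bnorm_eq0 n (B : 'M[R]_n) (x : 'cV[R]_n) : posdef B -> bnorm B x = 0 -> x = 0.
Proof.
move=> pdB /eqP; rewrite bnormE sqrtr_eq0 => q_le0; apply/eqP.
by apply: contraLR q_le0; rewrite -ltNge; apply: pdB.
Qed.

(* The last hypothesis only matters when [eps < 0]. *)
Lemma le_relative_error (a b y z k eps : R) : 0 <= b -> 0 <= y -> 0 <= z -> 0 <= k ->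
  a <= k * b -> b <= eps * y -> y <= k * z -> (y = 0 -> z = 0) ->
  a <= eps * k ^+ 2 * z.
Proof.
move=> b_ge0 y_ge0 z_ge0 k_ge0 le_ab le_by le_yz y0_z0.
have [eps_ge0|eps_lt0] := leP 0 eps.
  have := ler_wpM2l k_ge0 le_by; have := ler_wpM2l (mulr_ge0 k_ge0 eps_ge0) le_yz.
  nra.
have y0 : y = 0 by nra.
by rewrite y0_z0 // mulr0; rewrite y0 mulr0 in le_by; nra.
Qed.

Lemma bnorm_le_of_qform_le n (B C : 'M[R]_n) c (x y : 'cV[R]_n) : 0 <= c -> psd C ->
  qform B x <= c * qform C y -> bnorm B x <= Num.sqrt c * bnorm C y.
Proof. by move=> c_ge0 psdC; rewrite !bnormE -sqrtrM // ler_sqrt // mulr_ge0. Qed.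

Lemma bnorm_relative_error n (M P T : 'M[R]_n) c eps (e y z : 'cV[R]_n) :
  0 <= c -> psd M -> posdef P -> posdef T -> y = T *m z ->
  (forall x, qform M x <= c * qform P x) -> qform P y <= c * qform M z ->
  bnorm P e <= eps * bnorm P y -> bnorm M e <= eps * c * bnorm M z.
Proof.
move=> c_ge0 psdM pdP pdT yTz leMP leyz le_ey.
have psdP := posdef_psd pdP.
rewrite -(sqr_sqrtr c_ge0); apply: le_relative_error le_ey _ _;
  rewrite ?bnorm_ge0 ?sqrtr_ge0 //; try exact: bnorm_le_of_qform_le.
by move/(bnorm_eq0 pdP); rewrite yTz => /(posdef_mulmx_eq0 pdT) ->; rewrite bnorm0.
Qed.

Lemma resolvent_diff_mul n (W : 'M[R]_n) lam (r : 'cV[R]_n) :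
  W \in unitmx -> W + lam%:M \in unitmx -> lam != 0 ->
  let z := lam^-1 *: (invmx W *m r - invmx (W + lam%:M) *m r) in
  invmx W *m r = (W + lam%:M) *m z /\ invmx (W + lam%:M) *m r = W *m z.
Proof.
move=> uW uWl lam_neq0 z; split; rewrite /z -scalemxAr mulmxBr !mulmxA.
  rewrite mulmxV // mulmxDl mul_scalar_mx mulmxV // mulmxDl -scalemxAl addrAC subrr.
  by rewrite add0r scalerA mulVf // scale1r.
rewrite mulmxV // -(mulmxV uWl) -!mulmxBl [W + _]addrC addrK mul_scalar_mx -scalemxAl.
by rewrite scalerA mulVf // scale1r.
Qed.

Lemma sqr_gram_mulmx_le m n (A : 'M[R]_(m, n)) (x : 'cV[R]_n) :
  dot (A^T *m A *m x) (A^T *m A *m x) <= specnorm (A *m A^T) * dot (A *m x) (A *m x).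
Proof. by rewrite -mulmxA -qform_gram_tr qform_le_specnorm. Qed.

Section GramShift.
Variables (m n : nat) (A : 'M[R]_(m, n)) (lam : R).
Hypothesis lam_ge0 : 0 <= lam.
Local Notation W := (A^T *m A).

Lemma trmx_gram_tr_add_scalar : (A *m A^T + lam%:M)^T = A *m A^T + lam%:M.
Proof. by rewrite linearD /= trmx_mul trmxK tr_scalar_mx. Qed.

Lemma psd_gram_tr_add_scalar : psd (A *m A^T + lam%:M).
Proof. by apply: psd_add_scalar => // y; rewrite qform_gram_tr dotxx_ge0. Qed.

Lemma gram_sqr_addZ : W *m W + lam *: W = A^T *m (A *m A^T + lam%:M) *m A.
Proof. by rewrite mulmxDr mulmxDl mul_mx_scalar -scalemxAl !mulmxA. Qed.

Lemma psd_gram_sqr_addZ : psd (W *m W + lam *: W).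
Proof. by move=> x; rewrite gram_sqr_addZ qform_conj psd_gram_tr_add_scalar. Qed.

Lemma trmx_gram_sqr_addZ : (W *m W + lam *: W)^T = W *m W + lam *: W.
Proof. by rewrite gram_sqr_addZ !trmx_mul trmxK trmx_gram_tr_add_scalar mulmxA. Qed.

Lemma qform_gram_sqr_addZ x :
  qform (W *m W + lam *: W) x = dot (W *m x) (W *m x) + lam * dot (A *m x) (A *m x).
Proof.
by rewrite gram_sqr_addZ qform_conj qform_add_scalar qform_gram_tr mulmxA.
Qed.

Lemma qform_gram_sqr_addZ_le_gram x :
  qform (W *m W + lam *: W) x <= specnorm (A *m A^T + lam%:M) * qform W x.
Proof. by rewrite gram_sqr_addZ qform_conj qform_gram qform_le_specnorm. Qed.

Lemma qform_gram_shift_le x :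
  qform W ((W + lam%:M) *m x) <= specnorm (A *m A^T + lam%:M) * qform (W *m W + lam *: W) x.
Proof.
rewrite qform_gram gram_sqr_addZ qform_conj.
have -> : A *m ((W + lam%:M) *m x) = (A *m A^T + lam%:M) *m (A *m x).
  by rewrite !mulmxA mulmxDr !mulmxDl mul_mx_scalar mul_scalar_mx -!scalemxAl !mulmxA.
apply: sqr_mulmx_le_specnorm; [exact: trmx_gram_tr_add_scalar | exact: psd_gram_tr_add_scalar].
Qed.

Lemma qform_gram_sqr_addZ_le_shift x :
  qform (W *m W + lam *: W) x <= specnorm (A *m A^T) * qform (W + lam%:M) x.
Proof.
rewrite qform_gram_sqr_addZ qform_add_scalar qform_gram mulrDr mulrCA.
by apply: lerD; rewrite ?ler_wpM2l ?sqr_gram_mulmx_le ?sqr_mulmx_le_specnorm_tr.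
Qed.

Lemma qform_shift_gram_le x :
  qform (W + lam%:M) (W *m x) <= specnorm (A *m A^T) * qform (W *m W + lam *: W) x.
Proof.
rewrite qform_add_scalar qform_gram qform_gram_sqr_addZ mulrDr mulrCA.
apply: lerD; last by rewrite ler_wpM2l ?sqr_gram_mulmx_le.
have -> : A *m (W *m x) = A *m A^T *m (A *m x) by rewrite !mulmxA.
rewrite -[W *m x]mulmxA -qform_gram_tr.
apply: sqr_mulmx_le_specnorm => [|y]; first by rewrite trmx_mul trmxK.
by rewrite qform_gram_tr dotxx_ge0.
Qed.

End GramShift.

End QuadraticForms.

Theorem mainTheorem13 (R : realType) (m s : nat) (At : 'M[R]_(m, s))
  (lam eps21 eps22 : R) (r uh vh : 'cV[R]_s) :
  \rank At = s -> 0 < lam ->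
  let W := At^T *m At in
  let ustar := invmx W *m r in
  let vstar := invmx (W + lam%:M) *m r in
  let zstar := lam^-1 *: (ustar - vstar) in
  bnorm W (uh - ustar) <= eps21 * bnorm W ustar ->
  bnorm (W + lam%:M) (vh - vstar) <= eps22 * bnorm (W + lam%:M) vstar ->
  let zh := lam^-1 *: (uh - vh) in
  bnorm (W *m W + lam *: W) (zh - zstar) <=
    lam^-1 * (eps21 * specnorm (At *m At^T + lam%:M)
              + eps22 * specnorm (At *m At^T))
    * bnorm (W *m W + lam *: W) zstar.
Proof.
move=> rankA lam_gt0 W ustar vstar zstar err_u err_v; rewrite [is_true _]/=.
have lam_ge0 := ltW lam_gt0.
have pdW : posdef W := posdef_gram rankA.
have pdWl : posdef (W + lam%:M) := posdef_add_scalar (psd_gram At) lam_gt0.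
have [us_eq vs_eq] : ustar = (W + lam%:M) *m zstar /\ vstar = W *m zstar :=
  resolvent_diff_mul r (posdef_unitmx pdW) (posdef_unitmx pdWl) (lt0r_neq0 lam_gt0).
set M := W *m W + lam *: W.
have psdM : psd M := psd_gram_sqr_addZ At lam_ge0.
have err_u_M : bnorm M (uh - ustar) <=
    eps21 * specnorm (At *m At^T + lam%:M) * bnorm M zstar.
  apply: (bnorm_relative_error (specnorm_ge0 _) psdM pdW pdWl us_eq _ _ err_u).
    exact: qform_gram_sqr_addZ_le_gram.
  by rewrite us_eq; apply: qform_gram_shift_le.
have err_v_M : bnorm M (vh - vstar) <= eps22 * specnorm (At *m At^T) * bnorm M zstar.
  apply: (bnorm_relative_error (specnorm_ge0 _) psdM pdWl pdW vs_eq _ _ err_v).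
    exact: qform_gram_sqr_addZ_le_shift.
  by rewrite vs_eq; apply: qform_shift_gram_le.
have -> : lam^-1 *: (uh - vh) - zstar = lam^-1 *: ((uh - ustar) - (vh - vstar)).
  rewrite /zstar -scalerBr; congr (_ *: _).
  by rewrite !opprB [LHS]addrACA [RHS]addrACA [- vh - _]addrC.
rewrite bnormZ ger0_norm ?invr_ge0 // -mulrA ler_wpM2l ?invr_ge0 // mulrDl.
exact: le_trans (bnormB_le _ _ (trmx_gram_sqr_addZ At lam) psdM) (lerD err_u_M err_v_M).
Qed.
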